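(* Consider one iteration of the $r$-cGA (without frequency borders) on \textit{G}-OneMax with current frequencies $p^{(t)}_{i,j}$, $(i,j)\in\{1,\dots,n\}\times\{0,\dots,r-1\}$, and let $x,y$ be the two strings sampled in this iteration. Fix $i\in\{1,\dots,n\}$ and let $D_i=\sum_{j\ne i}x_j-\sum_{j\ne i}y_j$. Then, for sufficiently large $n$, \[\Pr[D_i=0]\ge \frac{4}{9\left(2(r-1)\sqrt{3n}+1\right)}.\]
   Context: Let $n\ge 1$, $r\ge 2$ be integers and $K>0$. \textit{G}-OneMax$(x)=\sum_{i=1}^n x_i$ for $x\in\{0,\dots,r-1\}^n$. The $r$-cGA with parameter $K$ maintains frequencies $p^{(t)}_{i,j}$ (each row a probability distribution over $\{0,\dots,r-1\}$), initially $1/r$. In iteration $t$ it samples two strings $x,y$ independently, each position $i$ of each string taking value $j$ with probability $p^{(t)}_{i,j}$ independently of other positions; if $f(x)<f(y)$ they are swapped; then $p^{(t+1)}_{i,j}=p^{(t)}_{i,j}+\frac1K(\mathbf 1[x_i=j]-\mathbf 1[y_i=j])$. *)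

From HB Require Import structures.
From mathcomp Require Import all_boot all_order all_algebra.
Set Implicit Arguments. Unset Strict Implicit. Unset Printing Implicit Defensive.
Import Order.TTheory GRing.Theory Num.Theory.
Local Open Scope ring_scope.

(* Positions are 'I_n (i.e. {0..n-1} instead of {1..n}), values are 'I_r.
   A string is a finite function {ffun 'I_n -> 'I_r}. *)

Definition is_freq (R : numDomainType) (n r : nat) (p : 'I_n -> 'I_r -> R) : Prop :=
  (forall i j, 0 <= p i j) /\ (forall i, \sum_(j < r) p i j = 1).

Definition sample_prob (R : numDomainType) (n r : nat) (p : 'I_n -> 'I_r -> R)
    (x : {ffun 'I_n -> 'I_r}) : R :=
  \prod_(j < n) p j (x j).

Definition gom_without (n r : nat) (x : {ffun 'I_n -> 'I_r}) (i : 'I_n) : nat :=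
  (\sum_(j < n | j != i) (x j : nat))%N.

Definition prob_Di_zero (R : numDomainType) (n r : nat) (p : 'I_n -> 'I_r -> R)
    (i : 'I_n) : R :=
  \sum_(x : {ffun 'I_n -> 'I_r}) \sum_(y : {ffun 'I_n -> 'I_r})
     (if gom_without x i == gom_without y i
      then sample_prob p x * sample_prob p y else 0).

From HB Require Import structures.
From mathcomp Require Import all_boot all_order all_algebra.
From mathcomp Require Import zify ring lra.
Import Order.TTheory GRing.Theory Num.Theory.
Local Open Scope ring_scope.

Set Implicit Arguments.
Unset Strict Implicit.
Unset Printing Implicit Defensive.

(* Let q_k be the probability that the G-OneMax value of x outside position i
   is k; then Pr[D_i = 0] is the collision probability \sum_k q_k^2.
   Swapping position j between x and y preserves the joint probability and
   negates x_j - y_j, so the cross terms of E[D_i^2] vanish and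
   E[D_i^2] <= n (r-1)^2.  Chebyshev's inequality then gives
   Pr[|D_i| <= T] >= 2/3 for T = floor((r-1) sqrt(3n)), while
   2 q_k q_l <= q_k^2 + q_l^2 bounds Pr[|D_i| <= T] = \sum_{|k-l| <= T} q_k q_l
   by (2T+1) \sum_k q_k^2.  Hence Pr[D_i = 0] >= 2 / (3 (2T+1)), for every n. *)

Definition near (T k l : nat) : bool := ((k <= l + T) && (l <= k + T))%N.

Lemma near_sym T : symmetric (near T).
Proof. by move=> k l; rewrite /near andbC. Qed.

Lemma sum_near_le T k B : (\sum_(l < B) near T k l <= T.*2.+1)%N.
Proof.
have -> : (\sum_(l < B) near T k l = minn B (k + T).+1 - (k - T))%N.
  elim: B => [|B IH]; first by rewrite big_ord0 min0n.
  by rewrite big_ord_recr /= IH /near; case: (boolP (_ && _)) => /=; lia.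
lia.
Qed.

Lemma far_sqr_ge (R : realDomainType) T a b :
  ~~ near T a b -> T.+1%:R ^+ 2 <= (a%:R - b%:R : R) ^+ 2.
Proof.
rewrite /near negb_and -!ltnNge => far.
have T_ge0 : 0 <= T.+1%:R :> R by [].
have [gap|gap] : T.+1%:R <= a%:R - b%:R :> R \/ T.+1%:R <= b%:R - a%:R :> R.
  by case/orP: far => lt; [left | right]; rewrite lerBrDr -natrD ler_nat; lia.
all: nra.
Qed.

Lemma exists_isqrt M : exists T, (T ^ 2 <= M < T.+1 ^ 2)%N.
Proof.
elim: M => [|M [T HT]]; first by exists 0%N.
by case: (ltnP M.+1 (T.+1 * T.+1)) => lt; [exists T | exists T.+1]; nia.
Qed.

Lemma sum_rel_mul_le (R : realFieldType) (I : finType) (c : rel I) (q : I -> R) m :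
  symmetric c -> (forall k, \sum_l (c k l)%:R <= m) ->
  \sum_k \sum_l (c k l)%:R * (q k * q l) <= m * \sum_k q k ^+ 2.
Proof.
move=> c_sym row_le.
set A := \sum_k \sum_l (c k l)%:R * q k ^+ 2.
have A_swap : \sum_k \sum_l (c l k)%:R * q l ^+ 2 = A by rewrite exchange_big.
apply: (@le_trans _ _ ((A + A) / 2)).
  rewrite -{2}A_swap /A -big_split mulr_suml /=; apply: ler_sum => k _.
  rewrite -big_split mulr_suml /=; apply: ler_sum => l _.
  rewrite (c_sym l k); case: (c k l) => /=; last by lra.
  by have := sqr_ge0 (q k - q l); lra.
have -> : (A + A) / 2 = A by lra.
rewrite /A mulr_sumr; apply: ler_sum => k _.
by rewrite -mulr_suml ler_wpM2r ?sqr_ge0 ?row_le.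
Qed.

Section Law.
Variables (R : comPzRingType) (X : finType) (w : X -> R) (S : X -> nat) (B : nat).
Hypothesis S_lt : forall x, (S x < B)%N.

Definition law (k : nat) : R := \sum_x w x * (S x == k)%:R.

Lemma sum_law (f : nat -> R) : \sum_x w x * f (S x) = \sum_(k < B) law k * f k.
Proof.
under [RHS]eq_bigr do rewrite mulr_suml.
rewrite exchange_big /=; apply: eq_bigr => x _.
rewrite (bigD1 (Ordinal (S_lt x))) //= eqxx mulr1 big1 ?addr0 // => k neq_k.
suff -> : (S x == k) = false by rewrite mulr0 mul0r.
by apply/negbTE; apply: contra neq_k => /eqP eq_k; apply/eqP/val_inj.
Qed.

Lemma sum2_law (F : nat -> nat -> R) :
  \sum_x \sum_y w x * w y * F (S x) (S y) =
  \sum_(k < B) \sum_(l < B) law k * law l * F k l.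
Proof.
under eq_bigr do under eq_bigr do rewrite -mulrA.
under eq_bigr do rewrite -mulr_sumr (sum_law (F (S _))).
rewrite (sum_law (fun k => \sum_(l < B) law l * F k l)).
by apply: eq_bigr => k _; rewrite mulr_sumr; apply: eq_bigr => l _; rewrite mulrA.
Qed.

Lemma sum_collision_law :
  \sum_x \sum_y (if S x == S y then w x * w y else 0) = \sum_(k < B) law k ^+ 2.
Proof.
transitivity (\sum_x \sum_y w x * w y * (S x == S y)%:R).
  by apply: eq_bigr => x _; apply: eq_bigr => y _; case: ifP; rewrite ?mulr1 ?mulr0.
rewrite (sum2_law (fun k l => (k == l)%:R)); apply: eq_bigr => k _.
rewrite (bigD1 k) //= eqxx mulr1 big1 ?addr0 // => l /negbTE neq_l.
by rewrite eq_sym [_ == _]neq_l mulr0.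
Qed.

End Law.

Lemma sum_near_mass_le (R : realFieldType) (X : finType) (w : X -> R)
    (S : X -> nat) B T :
  (forall x, S x < B)%N ->
  \sum_x \sum_y w x * w y * (near T (S x) (S y))%:R
    <= (T.*2.+1)%:R * \sum_(k < B) law w S k ^+ 2.
Proof.
move=> S_lt; rewrite (sum2_law _ S_lt (fun k l => (near T k l)%:R)).
under eq_bigr do under eq_bigr do rewrite mulrC.
apply: (sum_rel_mul_le (c := fun k l : 'I_B => near T k l)) => [k l|k].
  exact: near_sym.
by rewrite -natr_sum ler_nat sum_near_le.
Qed.

Definition swap_at (I : finType) (V : Type) (j : I)
    (xy : {ffun I -> V} * {ffun I -> V}) :=
  ([ffun l => if l == j then xy.2 l else xy.1 l],
   [ffun l => if l == j then xy.1 l else xy.2 l]).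

Lemma swap_atK (I : finType) (V : Type) (j : I) : involutive (@swap_at I V j).
Proof.
by case=> x y; congr pair; apply/ffunP => l; rewrite !ffunE; case: (l == j).
Qed.

Section SampleProb.
Variables (R : realFieldType) (n r : nat) (p : 'I_n -> 'I_r -> R).
Hypothesis freq_p : is_freq p.
Implicit Types (x y : {ffun 'I_n -> 'I_r})
  (xy : {ffun 'I_n -> 'I_r} * {ffun 'I_n -> 'I_r}).

Local Notation P := (sample_prob p).
Local Notation gap xy j := ((xy.1 j : nat)%:R - (xy.2 j : nat)%:R : R).

Lemma sample_prob_ge0 x : 0 <= P x.
Proof. by case: freq_p => p_ge0 _; apply: prodr_ge0. Qed.

Lemma sum_sample_prob : \sum_x P x = 1.
Proof.
case: freq_p => _ row_sum1.
by rewrite /sample_prob -bigA_distr_bigA big1 // => j _; rewrite row_sum1.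
Qed.

Lemma sum_sample_prob2 : \sum_xy P xy.1 * P xy.2 = 1.
Proof.
rewrite -(pair_bigA _ (fun x y => P x * P y)) /=.
by under eq_bigr do rewrite -mulr_sumr sum_sample_prob mulr1; rewrite sum_sample_prob.
Qed.

Lemma sample_prob_swap_at j xy :
  P (swap_at j xy).1 * P (swap_at j xy).2 = P xy.1 * P xy.2.
Proof.
rewrite /sample_prob -!big_split /=; apply: eq_bigr => l _.
by rewrite !ffunE; case: (l == j); rewrite // mulrC.
Qed.

Lemma sum_gap_cross j k : j != k ->
  \sum_xy P xy.1 * P xy.2 * (gap xy j * gap xy k) = 0.
Proof.
move=> neq_jk; set s := \sum_xy _.
suff : s = - s by lra.
rewrite {1}/s (reindex_inj (can_inj (swap_atK j))) /= -sumrN.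
apply: eq_bigr => xy _; rewrite sample_prob_swap_at !ffunE eqxx eq_sym (negbTE neq_jk).
ring.
Qed.

Lemma gap_sqr_le xy j : gap xy j ^+ 2 <= (r - 1)%:R ^+ 2.
Proof.
have val_le (v : 'I_r) : (v : nat)%:R <= (r - 1)%:R :> R.
  by rewrite ler_nat; have := ltn_ord v; lia.
have := val_le (xy.1 j); have := val_le (xy.2 j).
have := ler0n R (xy.1 j); have := ler0n R (xy.2 j).
nra.
Qed.

Lemma sum_gap_sqr_le (J : pred 'I_n) :
  \sum_xy P xy.1 * P xy.2 * (\sum_(j | J j) gap xy j) ^+ 2 <= n%:R * (r - 1)%:R ^+ 2.
Proof.
have expand xy : P xy.1 * P xy.2 * (\sum_(j | J j) gap xy j) ^+ 2 =
    \sum_(j | J j) \sum_(k | J k) P xy.1 * P xy.2 * (gap xy j * gap xy k).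
  rewrite expr2 mulr_suml mulr_sumr; apply: eq_bigr => j _.
  by rewrite mulr_sumr !mulr_sumr; apply: eq_bigr => k _; ring.
rewrite (eq_bigr _ (fun xy _ => expand xy)) exchange_big /=.
under eq_bigr do rewrite exchange_big /=.
have diag j : J j -> \sum_(k | J k) \sum_xy P xy.1 * P xy.2 * (gap xy j * gap xy k) =
    \sum_xy P xy.1 * P xy.2 * gap xy j ^+ 2.
  move=> Jj; rewrite (bigD1 j) //= [X in _ + X]big1 ?addr0; last first.
    by move=> k /andP[_ neq_k]; rewrite sum_gap_cross // eq_sym.
  by under [RHS]eq_bigr do rewrite expr2.
rewrite (eq_bigr _ diag).
have moment_le j : \sum_xy P xy.1 * P xy.2 * gap xy j ^+ 2 <= (r - 1)%:R ^+ 2.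
  apply: (@le_trans _ _ (\sum_xy P xy.1 * P xy.2 * (r - 1)%:R ^+ 2)).
    by apply: ler_sum => xy _; rewrite ler_wpM2l ?gap_sqr_le ?mulr_ge0 ?sample_prob_ge0.
  by rewrite -mulr_suml sum_sample_prob2 mul1r.
apply: le_trans (ler_sum _ (fun j _ => moment_le j)) _.
rewrite mulr_natl -[in X in _ <= X](card_ord n) -sumr_const big_mkcond /=.
by apply: ler_sum => j _; case: (J j); rewrite ?sqr_ge0.
Qed.

Lemma near_mass_ge i T : (3 * n * (r - 1) ^ 2 < T.+1 ^ 2)%N ->
  2 / 3 <= \sum_x \sum_y P x * P y * (near T (gom_without x i) (gom_without y i))%:R.
Proof.
move=> T_large; rewrite pair_bigA /=.
set far := \sum_xy P xy.1 * P xy.2 *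
  (~~ near T (gom_without xy.1 i) (gom_without xy.2 i))%:R.
have near_far : far + \sum_xy P xy.1 * P xy.2 *
    (near T (gom_without xy.1 i) (gom_without xy.2 i))%:R = 1.
  rewrite -big_split -[RHS]sum_sample_prob2; apply: eq_bigr => xy _.
  by case: (near _ _ _); rewrite /= ?mulr1 ?mulr0 ?addr0 ?add0r.
have far_ge0 : 0 <= far.
  by apply: sumr_ge0 => xy _; rewrite !mulr_ge0 ?sample_prob_ge0.
have chebyshev : far * T.+1%:R ^+ 2 <= n%:R * (r - 1)%:R ^+ 2.
  apply: le_trans (sum_gap_sqr_le (fun j => j != i)).
  rewrite mulr_suml; apply: ler_sum => xy _.
  rewrite -mulrA ler_wpM2l ?mulr_ge0 ?sample_prob_ge0 // sumrB -!natr_sum.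
  case: (boolP (near _ _ _)) => [_|far_xy]; first by rewrite mul0r sqr_ge0.
  by rewrite mul1r far_sqr_ge.
have T_large_R : 3 * (n%:R * (r - 1)%:R ^+ 2) < T.+1%:R ^+ 2 :> R.
  by rewrite -!natrX -!natrM ltr_nat mulnA.
have t_gt0 : 0 < T.+1%:R ^+ 2 :> R by rewrite exprn_gt0 ?ltr0n.
have : 3 * far < 1 by rewrite -(ltr_pM2r t_gt0) mul1r -mulrA; lra.
lra.
Qed.

End SampleProb.

Lemma gom_without_le n r (x : {ffun 'I_n -> 'I_r}) i : (gom_without x i <= n * r)%N.
Proof.
rewrite /gom_without big_mkcond /= -[in X in (_ <= X)%N](card_ord n) -sum_nat_const.
by apply: leq_sum => j _; case: (j != i) => //; apply: ltnW.
Qed.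

Theorem lemma3 (R : rcfType) (r : nat) (hr : (2 <= r)%N) :
  exists N : nat, forall n : nat, (N <= n)%N ->
  forall (p : 'I_n -> 'I_r -> R), is_freq p ->
  forall i : 'I_n,
    4 / (9 * (2 * (r - 1)%:R * Num.sqrt (3 * n%:R) + 1)) <= prob_Di_zero p i.
Proof.
exists 0%N => n _ p freq_p i.
have S_lt (x : {ffun 'I_n -> 'I_r}) : (gom_without x i < (n * r).+1)%N.
  by rewrite ltnS gom_without_le.
have [T /andP[T_sqr_le T_sqr_gt]] := exists_isqrt (3 * n * (r - 1) ^ 2).
have near_le := sum_near_mass_le (sample_prob p) T S_lt.
have near_ge := near_mass_ge freq_p i T_sqr_gt.
have T_le : T%:R <= (r - 1)%:R * Num.sqrt (3 * n%:R) :> R.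
  rewrite -ler_sqr ?nnegrE ?mulr_ge0 ?sqrtr_ge0 // exprMn sqr_sqrtr ?mulr_ge0 //.
  by rewrite -!natrX -!natrM ler_nat mulnC.
rewrite /prob_Di_zero (sum_collision_law _ S_lt).
set Q := \sum_(k < _) _ in near_le *.
have Q_ge0 : 0 <= Q by apply: sumr_ge0 => k _; exact: sqr_ge0.
rewrite -[T.*2.+1]addn1 -mul2n natrD natrM in near_le.
rewrite -mulrA; set w := _ * Num.sqrt _ in T_le *.
have := ler_wpM2r Q_ge0 T_le.
rewrite ler_pdivrMr; nra.
Qed.
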